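(* Let $r>0$, $\zeta_k>0$, $H>0$, $P_{\text{peak}}>0$, $\gamma_0>0$, $\theta_k\in\mathbb{R}$ and $\theta_l\in\mathbb{R}$ be fixed. For $\theta\in\mathbb{R}$ let $$S_{k,\max}(\theta)=\frac{P_{\text{peak}}\gamma_0}{r^2+\zeta_k^2+H^2-2r\zeta_k\cos(\theta-\theta_k)}.$$ Define $\hat b_k=\theta_l-\sin(\theta_l-\theta_k)$, $\hat A_k=r^2+\zeta_k^2+H^2-r\zeta_k\big(2\cos(\theta_l-\theta_k)+\sin^2(\theta_l-\theta_k)\big)$, $$\hat B_k=2r\zeta_k\left(\frac{1}{\hat A_k^2}-\frac{1}{(r\zeta_k\sin^2(\theta_l-\theta_k)+\hat A_k)^2}\right),$$ $$\hat C_k=\frac{1}{r\zeta_k\sin^2(\theta_l-\theta_k)+\hat A_k}+\frac{2r\zeta_k\sin^2(\theta_l-\theta_k)}{(r\zeta_k\sin^2(\theta_l-\theta_k)+\hat A_k)^2}-\frac{r\zeta_k\sin^2(\theta_l-\theta_k)}{\hat A_k^2},$$ and $$S^{\text{lb2}}_{k,\max}(\theta)=P_{\text{peak}}\gamma_0\left(-\frac{r\zeta_k(\theta-\hat b_k)^2}{\hat A_k^2}+\hat B_k\sin(\theta_l-\theta_k)(\theta-\hat b_k)+\hat C_k\right).$$ Then $\hat A_k>0$ and for all $\theta\in\mathbb{R}$, $$S^{\text{lb2}}_{k,\max}(\theta)\le\frac{P_{\text{peak}}\gamma_0}{r\zeta_k(\theta-\hat b_k)^2+\hat A_k}\le S_{k,\max}(\theta),$$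 with equality throughout at $\theta=\theta_l$; moreover $S^{\text{lb2}}_{k,\max}$ is concave in $\theta$. *)

From Stdlib Require Import Reals Lra.
Open Scope R_scope.

Definition S_max (r zeta H P g0 thk th : R) : R :=
  P * g0 / (r ^ 2 + zeta ^ 2 + H ^ 2 - 2 * r * zeta * cos (th - thk)).

Definition b_hat (thk thl : R) : R := thl - sin (thl - thk).

Definition A_hat (r zeta H thk thl : R) : R :=
  r ^ 2 + zeta ^ 2 + H ^ 2
  - r * zeta * (2 * cos (thl - thk) + (sin (thl - thk)) ^ 2).

Definition B_hat (r zeta H thk thl : R) : R :=
  let A := A_hat r zeta H thk thl in
  let s2 := (sin (thl - thk)) ^ 2 in
  2 * r * zeta * (1 / A ^ 2 - 1 / (r * zeta * s2 + A) ^ 2).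

Definition C_hat (r zeta H thk thl : R) : R :=
  let A := A_hat r zeta H thk thl in
  let s2 := (sin (thl - thk)) ^ 2 in
  1 / (r * zeta * s2 + A)
  + 2 * r * zeta * s2 / (r * zeta * s2 + A) ^ 2
  - r * zeta * s2 / A ^ 2.

Definition S_lb2 (r zeta H P g0 thk thl th : R) : R :=
  let A := A_hat r zeta H thk thl in
  let b := b_hat thk thl in
  P * g0 * (- (r * zeta * (th - b) ^ 2) / A ^ 2
            + B_hat r zeta H thk thl * sin (thl - thk) * (th - b)
            + C_hat r zeta H thk thl).

Definition S_mid (r zeta H P g0 thk thl th : R) : R :=
  P * g0 / (r * zeta * (th - b_hat thk thl) ^ 2 + A_hat r zeta H thk thl).

Definition concave (f : R -> R) : Prop :=
  forall x y t : R, 0 <= t <= 1 ->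
    t * f x + (1 - t) * f y <= f (t * x + (1 - t) * y).

(* The middle bound is the second-order Taylor minorant of cos around [theta_l] plugged into the
   denominator of [S_max]: cos (d + h) >= cos d - h sin d - h^2/2 with d = theta_l - theta_k,
   h = theta - theta_l, which after completing the square in [h] gives the denominator
   [r zeta (theta - b_hat)^2 + A_hat].  The lower bound [S_lb2] is a concave quadratic in
   [y = theta - b_hat] touching [1 / (a y^2 + A)] at [y = sin d]; their difference is a sum of
   two squares. *)
From Stdlib Require Import Reals Lra Psatz.
From Coquelicot Require Import Coquelicot.
Open Scope R_scope.

Lemma mvt_from_zero (f f' : R -> R) :
  (forall x, is_derive f x (f' x)) ->
  forall x, exists y, 0 <= y * x /\ f x - f 0 = f' y * x.
Proof.
  intros Hf x.
  destruct (MVT_gen f 0 x f') as [y [Hy Hmvt]].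
  - intros y _. apply Hf.
  - intros y _. apply continuity_pt_filterlim.
    apply (@ex_derive_continuous R_AbsRing R_NormedModule). exists (f' y). apply Hf.
  - exists y. rewrite Rminus_0_r in Hmvt. split; [|exact Hmvt].
    unfold Rmin, Rmax in Hy. destruct (Rle_dec 0 x); nra.
Qed.

Lemma nonneg_of_second_derive_nonneg (f f' f'' : R -> R) :
  (forall x, is_derive f x (f' x)) -> (forall x, is_derive f' x (f'' x)) ->
  f 0 = 0 -> f' 0 = 0 -> (forall x, 0 <= f'' x) ->
  forall x, 0 <= f x.
Proof.
  intros Hf Hf' f0 f'0 Hf'' x.
  assert (same_sign : forall y, 0 <= f' y * y).
  { intro y. destruct (mvt_from_zero f' f'' Hf' y) as [z [_ Hz]].
    rewrite f'0, Rminus_0_r in Hz. rewrite Hz.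
    pose proof (Hf'' z). pose proof (pow2_ge_0 y). nra. }
  destruct (mvt_from_zero f f' Hf x) as [y [Hyx Hy]].
  rewrite f0, Rminus_0_r in Hy. rewrite Hy.
  destruct (Req_dec y 0) as [->|Hy0]; [rewrite f'0; lra|].
  pose proof (same_sign y). assert (0 < y * y) by nra. nra.
Qed.

Lemma cos_add_quadratic_lower_bound (d h : R) :
  cos d - h * sin d - h ^ 2 / 2 <= cos (d + h).
Proof.
  pose (g := fun h => cos (d + h) - cos d + h * sin d + h ^ 2 / 2).
  enough (0 <= g h) by (unfold g in *; lra).
  apply (nonneg_of_second_derive_nonneg g
           (fun h => - sin (d + h) + sin d + h) (fun h => 1 - cos (d + h))).
  - intro x. unfold g. auto_derive; [easy | field].
  - intro x. auto_derive; [easy | ring].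
  - unfold g. cbv beta. rewrite Rplus_0_r. field.
  - cbv beta. rewrite !Rplus_0_r. ring.
  - intro x. pose proof (COS_bound (d + x)). lra.
Qed.

Lemma cos_dist_sq_pos (r zeta H x : R) :
  0 < H -> 0 < r ^ 2 + zeta ^ 2 + H ^ 2 - 2 * r * zeta * cos x.
Proof.
  intro hH. pose proof (COS_bound x).
  pose proof (pow2_ge_0 (r - zeta)). pose proof (pow2_ge_0 (r + zeta)).
  assert (0 < H ^ 2) by nra.
  destruct (Rle_dec 0 (r * zeta)); nra.
Qed.

Lemma A_hat_sum_squares (r zeta H thk thl : R) :
  A_hat r zeta H thk thl
  = (r - zeta) ^ 2 + H ^ 2 + r * zeta * (1 - cos (thl - thk)) ^ 2.
Proof.
  unfold A_hat.
  replace (sin (thl - thk) ^ 2) with (1 - cos (thl - thk) ^ 2)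
    by (pose proof (sin2_cos2 (thl - thk)); unfold Rsqr in *; lra).
  ring.
Qed.

Lemma A_hat_pos (r zeta H thk thl : R) :
  0 < r -> 0 < zeta -> 0 < H -> 0 < A_hat r zeta H thk thl.
Proof.
  intros hr hz hH. rewrite A_hat_sum_squares.
  pose proof (pow2_ge_0 (r - zeta)). pose proof (pow2_ge_0 (1 - cos (thl - thk))).
  assert (0 < H ^ 2) by nra. assert (0 < r * zeta) by nra. nra.
Qed.

Lemma S_max_denom_le_S_mid_denom (r zeta H thk thl th : R) :
  0 <= r * zeta ->
  r ^ 2 + zeta ^ 2 + H ^ 2 - 2 * r * zeta * cos (th - thk)
  <= r * zeta * (th - b_hat thk thl) ^ 2 + A_hat r zeta H thk thl.
Proof.
  intro ha.
  pose proof (cos_add_quadratic_lower_bound (thl - thk) (th - thl)) as Hcos.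
  replace (thl - thk + (th - thl)) with (th - thk) in Hcos by ring.
  unfold b_hat, A_hat. nra.
Qed.

(* With [E = a s^2 + A], this is the unique quadratic in [y] with leading coefficient
   [- a / A^2] that meets [1 / (a y^2 + A)] to first order at [y = s]. *)
Definition inv_quad_minorant (a A s y : R) : R :=
  - (a * y ^ 2) / A ^ 2 + 2 * a * (1 / A ^ 2 - 1 / (a * s ^ 2 + A) ^ 2) * s * y
  + (1 / (a * s ^ 2 + A) + 2 * a * s ^ 2 / (a * s ^ 2 + A) ^ 2 - a * s ^ 2 / A ^ 2).

Lemma inv_quad_minorant_le (a A s y : R) :
  0 < a -> 0 < A -> inv_quad_minorant a A s y <= / (a * y ^ 2 + A).
Proof.
  intros ha hA.
  set (E := a * s ^ 2 + A).
  assert (hAE : A <= E) by (pose proof (pow2_ge_0 s); unfold E; nra).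
  assert (hD : 0 < a * y ^ 2 + A) by (pose proof (pow2_ge_0 y); nra).
  assert (gap : / (a * y ^ 2 + A) - inv_quad_minorant a A s y
                = a ^ 2 * (y ^ 2 - s ^ 2) ^ 2 / (E ^ 2 * (a * y ^ 2 + A))
                  + a * (1 / A ^ 2 - 1 / E ^ 2) * (y - s) ^ 2).
  { unfold inv_quad_minorant, E in *. field. repeat split; lra. }
  assert (0 <= a ^ 2 * (y ^ 2 - s ^ 2) ^ 2 / (E ^ 2 * (a * y ^ 2 + A))).
  { apply Rle_mult_inv_pos; [|apply Rmult_lt_0_compat; [apply pow_lt|]; lra].
    apply Rmult_le_pos; apply pow2_ge_0. }
  assert (0 <= 1 / A ^ 2 - 1 / E ^ 2).
  { unfold Rdiv. rewrite !Rmult_1_l.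
    assert (/ E ^ 2 <= / A ^ 2) by (apply Rinv_le_contravar; nra). lra. }
  assert (0 <= a * (1 / A ^ 2 - 1 / E ^ 2) * (y - s) ^ 2).
  { apply Rmult_le_pos; [apply Rmult_le_pos; lra | apply pow2_ge_0]. }
  lra.
Qed.

Lemma inv_quad_minorant_at (a A s : R) :
  inv_quad_minorant a A s s = 1 / (a * s ^ 2 + A).
Proof. unfold inv_quad_minorant, Rdiv. ring. Qed.

Lemma S_lb2_eq (r zeta H P g0 thk thl th : R) :
  S_lb2 r zeta H P g0 thk thl th
  = P * g0 * inv_quad_minorant (r * zeta) (A_hat r zeta H thk thl) (sin (thl - thk))
                               (th - b_hat thk thl).
Proof. unfold S_lb2, B_hat, C_hat, inv_quad_minorant, Rdiv. ring. Qed.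

Lemma concave_ext (f g : R -> R) :
  (forall x, f x = g x) -> concave g -> concave f.
Proof. intros Hfg Hg x y t Ht. rewrite !Hfg. exact (Hg x y t Ht). Qed.

Lemma concave_quadratic (alpha beta gamma x0 : R) :
  0 <= alpha ->
  concave (fun x => - alpha * (x - x0) ^ 2 + beta * (x - x0) + gamma).
Proof.
  intros halpha x y t Ht.
  assert (gap : - alpha * (t * x + (1 - t) * y - x0) ^ 2 + beta * (t * x + (1 - t) * y - x0) + gamma
                - (t * (- alpha * (x - x0) ^ 2 + beta * (x - x0) + gamma)
                   + (1 - t) * (- alpha * (y - x0) ^ 2 + beta * (y - x0) + gamma))
                = alpha * (t * (1 - t)) * (x - y) ^ 2) by ring.
  assert (0 <= alpha * (t * (1 - t)) * (x - y) ^ 2).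
  { apply Rmult_le_pos; [apply Rmult_le_pos; nra | apply pow2_ge_0]. }
  lra.
Qed.

Theorem mainTheorem5 (r zeta H P g0 thk thl : R)
  (hr : 0 < r) (hz : 0 < zeta) (hH : 0 < H) (hP : 0 < P) (hg : 0 < g0) :
  0 < A_hat r zeta H thk thl /\
  (forall th : R,
     S_lb2 r zeta H P g0 thk thl th <= S_mid r zeta H P g0 thk thl th /\
     S_mid r zeta H P g0 thk thl th <= S_max r zeta H P g0 thk th) /\
  (S_lb2 r zeta H P g0 thk thl thl = S_mid r zeta H P g0 thk thl thl /\
   S_mid r zeta H P g0 thk thl thl = S_max r zeta H P g0 thk thl) /\
  concave (S_lb2 r zeta H P g0 thk thl).
Proof.
  pose proof (A_hat_pos r zeta H thk thl hr hz hH) as hA.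
  assert (ha : 0 < r * zeta) by nra.
  assert (hPg : 0 < P * g0) by nra.
  assert (hb : thl - b_hat thk thl = sin (thl - thk)) by (unfold b_hat; ring).
  split; [exact hA | split; [|split; [split|]]].
  - intro th. unfold S_mid, S_max, Rdiv. rewrite S_lb2_eq. split.
    + apply Rmult_le_compat_l; [lra | exact (inv_quad_minorant_le _ _ _ _ ha hA)].
    + apply Rmult_le_compat_l; [lra|]. apply Rinv_le_contravar.
      * apply cos_dist_sq_pos, hH.
      * apply S_max_denom_le_S_mid_denom. lra.
  - rewrite S_lb2_eq, hb, inv_quad_minorant_at. unfold S_mid, Rdiv. rewrite hb. ring.
  - unfold S_mid, S_max. rewrite hb. f_equal. unfold A_hat. ring.
  - apply (concave_ext _
      (fun th => - (P * g0 * (r * zeta) / A_hat r zeta H thk thl ^ 2) * (th - b_hat thk thl) ^ 2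
                 + P * g0 * B_hat r zeta H thk thl * sin (thl - thk) * (th - b_hat thk thl)
                 + P * g0 * C_hat r zeta H thk thl)).
    + intro th. unfold S_lb2, Rdiv. ring.
    + apply concave_quadratic. apply Rle_mult_inv_pos; [nra | apply pow_lt, hA].
Qed.
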